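(* Let $v_1\ge v_2>0$, $m\in\mathbb{Z}_{\ge1}$ and $0<b\le m$. Let $(X,Y)$ be a strategy profile with $\mathbf{E}(X)=m$ and $\mathbf{E}(Y)=b$ such that: $m=v_2/2$; $(X,Y)$ is a Nash equilibrium of the General Lotto game $\Gamma(m,b)$; $X=U_{\mathrm{O}}^m$; and $Y=\left(1-\frac bm\right)\delta_0+\frac bm Z$ where (a) if $m=1$: $Z=\lambda_{\mathrm{O}}U_{\mathrm{O}}^1+\lambda_{\mathrm{E}}U_{\mathrm{E}}^1$ with $\lambda_{\mathrm{O}},\lambda_{\mathrm{E}}\ge0$, $\lambda_{\mathrm{O}}+\lambda_{\mathrm{E}}=1$, $\frac{\lambda_{\mathrm{E}}}{2}\ge1-\frac{2}{bv_1}$ and $\frac{\lambda_{\mathrm{E}}}{2}\le\frac1b-\frac{2}{bv_1}$; (b) if $m\ge2$: $Z=\lambda_{\mathrm{O}}U_{\mathrm{O}}^m+\lambda_{\mathrm{E}}U_{\mathrm{E}}^m+\lambda_{\mathrm{O}\uparrow1}U_{\mathrm{O}\uparrow1}^m+\sum_{j=1}^{m-1}\lambda_jW_j^m$ with $\lambda_{\mathrm{O}},\lambda_{\mathrm{E}},\lambda_{\mathrm{O}\uparrow1},\lambda_1,\dots,\lambda_{m-1}\ge0$, $\lambda_{\mathrm{O}}+\lambda_{\mathrm{E}}+\lambda_{\mathrm{O}\uparrow1}+\sum_{j=1}^{m-1}\lambda_j=1$, $\frac{\lambda_{\mathrm{E}}}{m+1}+\frac{1}{2m}\sum_{j=1}^{m-1}\lambda_j\le\frac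 mb\left(1-\frac{v_2}{v_1}\right)$, $\frac{\lambda_{\mathrm{O}}}{m}+\frac{\lambda_{\mathrm{E}}}{m+1}+\frac{\lambda_{\mathrm{O}\uparrow1}}{m-1}+\frac{1}{m}\sum_{j=1}^{m-1}\lambda_j=\frac{2m}{bv_1}$, and, in the case $b>m-1$, $\frac{1}{2m}\sum_{j=1}^{m-1}\lambda_j+\frac{\lambda_{\mathrm{O}\uparrow1}}{m-1}\le\frac{m-b}{b}$. Then $(X,Y)$ is a Nash equilibrium of the discrete all-pay auction with valuations $v_1,v_2$.
   Context: Discrete all-pay auction: two players, 1 and 2, value a prize at $v_1$ and $v_2$ respectively, where $v_1\ge v_2>0$. A (mixed) strategy is a probability distribution on $\mathbb{Z}_{\ge 0}$ with finite mean, identified with a $\mathbb{Z}_{\ge0}$-valued random variable; the two players' choices are independent. If player 1 uses $X$ and player 2 uses $Y$, the expected payoffs are $P^1(X,Y)=v_1\Pr(X>Y)+\frac{v_1}{2}\Pr(X=Y)-\mathbf{E}(X)$ and $P^2(Y,X)=v_2\Pr(Y>X)+\frac{v_2}{2}\Pr(X=Y)-\mathbf{E}(Y)$. A Nash equilibrium of the all-pay auction is a pair $(X,Y)$ with $P^1(X,Y)\ge P^1(X',Y)$ and $P^2(Y,X)\ge P^2(Y',X)$ for all strategies $X',Y'$. $\delta_j$ denotes the point mass at $j$; $\lambda A+(1-\lambda)B$ denotes the mixture of distributions $A$ and $B$ (similarly for longer convex combinations). Discrete General Lotto game: for reals $a,b\ge 0$, in $\Gamma(a,b)$ player 1 chooses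 a distribution $X$ on $\mathbb{Z}_{\ge0}$ with $\mathbf{E}(X)=a$ and player 2 chooses a distribution $Y$ on $\mathbb{Z}_{\ge 0}$ with $\mathbf{E}(Y)=b$ (independently); the payoff to player 1 is $H(X,Y)=\Pr(X>Y)-\Pr(X<Y)$ and to player 2 is $H(Y,X)=-H(X,Y)$. A Nash equilibrium of $\Gamma(a,b)$ is a pair $(X,Y)$ from these strategy sets such that neither player can increase her payoff by switching to another strategy in her own strategy set. Special distributions: for $m\ge1$, $U_{\mathrm{O}}^m$ is the uniform distribution on $\{1,3,\dots,2m-1\}$; for $m\ge0$, $U_{\mathrm{E}}^m$ is the uniform distribution on $\{0,2,\dots,2m\}$; for $m\ge2$, $U_{\mathrm{O}\uparrow1}^m$ is the uniform distribution on $\{2,4,\dots,2m-2\}$; for $m\ge2$ and $1\le j\le m-1$, $W_j^m=\frac{1}{2m}\delta_0+\sum_{i=1}^{j-1}\frac1m\delta_{2i}+\frac{1}{2m}\delta_{2j}+\sum_{i=j+1}^{m}\frac1m\delta_{2i-1}$. *)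

From Stdlib Require Import Reals Lra Lia Arith List.
From Coquelicot Require Import Coquelicot.
Open Scope R_scope.

Definition is_strategy (p : nat -> R) : Prop :=
  (forall n, 0 <= p n) /\ is_series p 1 /\ ex_series (fun n => INR n * p n).

Definition mean (p : nat -> R) : R := Series (fun n => INR n * p n).

(* Pr(X > Y) for independent X ~ p, Y ~ q:  sum_i p(i) * Pr(Y < i). *)
Definition partial_mass (q : nat -> R) (i : nat) : R :=
  fold_right Rplus 0 (map q (seq 0 i)).
Definition prob_gt (p q : nat -> R) : R := Series (fun i => p i * partial_mass q i).
Definition prob_eq (p q : nat -> R) : R := Series (fun i => p i * q i).

Definition payoff1 (v1 : R) (p q : nat -> R) : R :=
  v1 * prob_gt p q + v1 / 2 * prob_eq p q - mean p.
Definition payoff2 (v2 : R) (q p : nat -> R) : R :=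
  v2 * prob_gt q p + v2 / 2 * prob_eq p q - mean q.

Definition allpay_NE (v1 v2 : R) (p q : nat -> R) : Prop :=
  is_strategy p /\ is_strategy q /\
  (forall p', is_strategy p' -> payoff1 v1 p' q <= payoff1 v1 p q) /\
  (forall q', is_strategy q' -> payoff2 v2 q' p <= payoff2 v2 q p).

Definition lotto_H (p q : nat -> R) : R := prob_gt p q - prob_gt q p.

Definition lotto_NE (a b : R) (p q : nat -> R) : Prop :=
  is_strategy p /\ mean p = a /\ is_strategy q /\ mean q = b /\
  (forall p', is_strategy p' -> mean p' = a -> lotto_H p' q <= lotto_H p q) /\
  (forall q', is_strategy q' -> mean q' = b -> lotto_H q' p <= lotto_H q p).

Definition delta (j : nat) (n : nat) : R := if Nat.eqb n j then 1 else 0.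

Definition sum_range (a k : nat) (f : nat -> R) : R :=
  fold_right Rplus 0 (map f (seq a k)).

Definition U_O (m : nat) (n : nat) : R :=
  sum_range 1 m (fun i => / INR m * delta (2 * i - 1) n).
Definition U_E (m : nat) (n : nat) : R :=
  sum_range 0 (m + 1) (fun i => / INR (m + 1) * delta (2 * i) n).
Definition U_Oup1 (m : nat) (n : nat) : R :=
  sum_range 1 (m - 1) (fun i => / INR (m - 1) * delta (2 * i) n).
Definition W (m j : nat) (n : nat) : R :=
  / (2 * INR m) * delta 0 n
  + sum_range 1 (j - 1) (fun i => / INR m * delta (2 * i) n)
  + / (2 * INR m) * delta (2 * j) n
  + sum_range (j + 1) (m - j) (fun i => / INR m * delta (2 * i - 1) n).

From Stdlib Require Import Reals List Lra Lia Arith.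
From Coquelicot Require Import Coquelicot.
Open Scope R_scope.

(* Against an opponent strategy q, a pure bid i earns the "gain"
   g(i) = v (Pr(q < i) + q(i)/2) - i, and the payoff of a mixed strategy p is
   the p-average of g.  Hence (p, q) is an equilibrium as soon as each
   player's gain function is maximal on the support of her strategy.  The
   gains obey g(i+1) - g(i) = v/2 (q(i) + q(i+1) - 2/v), so everything reduces
   to comparing consecutive masses of the opponent's strategy with 2/v.

   - Against U_O^m with v2 = 2m every consecutive pair carries mass 1/m = 2/v2,
     so player 2's gain is 0 on {0,...,2m} and decreasing afterwards.
   - Player 1's gain is maximal exactly on the odd bids 1,...,2m-1 when Y is
     "balanced": supported on {0,...,2m}, with Y(0)+Y(1) >= 2/v1, every pair
     Y(2k-1)+Y(2k) <= 2/v1 and every triple Y(2k-1)+2Y(2k)+Y(2k+1) = 4/v1.  Neither the Lotto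
   equilibrium property nor the first weight inequality of case (b) is needed
   for this direction. *)

Lemma is_series_nonneg (a : nat -> R) (l : R) :
  (forall n, 0 <= a n) -> is_series a l -> 0 <= l.
Proof.
  intros Ha Hl. apply Rle_trans with (sum_n a 0); [rewrite sum_O; apply Ha |].
  apply is_lim_seq_incr_compare; [exact Hl |].
  intro n. rewrite sum_Sn. unfold plus; simpl. specialize (Ha (S n)). lra.
Qed.

Lemma is_series_lincomb (a c : nat -> R) (la lc x y : R) :
  is_series a la -> is_series c lc ->
  is_series (fun n => x * a n + y * c n) (x * la + y * lc).
Proof.
  intros Ha Hc.
  exact (is_series_plus _ _ _ _ (is_series_scal_l x _ _ Ha) (is_series_scal_l y _ _ Hc)).
Qed.

Lemma partial_mass_S (q : nat -> R) (i : nat) :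
  partial_mass q (S i) = partial_mass q i + q i.
Proof.
  unfold partial_mass. rewrite seq_S, map_app, fold_right_app. simpl.
  induction (map q (seq 0 i)) as [| x l IH]; simpl; [ring | rewrite IH; ring].
Qed.

Lemma partial_mass_sum_n (q : nat -> R) (i : nat) : partial_mass q (S i) = sum_n q i.
Proof.
  induction i as [| i IH].
  - rewrite sum_O. unfold partial_mass; simpl. ring.
  - rewrite partial_mass_S, IH, sum_Sn. reflexivity.
Qed.

Lemma partial_mass_bounds (q : nat -> R) :
  is_strategy q -> forall i, 0 <= partial_mass q i <= 1.
Proof.
  intros [Hq [Hs _]] [| i]; [unfold partial_mass; simpl; lra |].
  rewrite partial_mass_sum_n. split.
  - induction i as [| i IH]; [rewrite sum_O; apply Hq |].
    rewrite sum_Sn. unfold plus; simpl. specialize (Hq (S i)). lra.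
  - apply is_lim_seq_incr_compare; [exact Hs |].
    intro n. rewrite sum_Sn. unfold plus; simpl. specialize (Hq (S n)). lra.
Qed.

Lemma mass_bounds (q : nat -> R) : is_strategy q -> forall i, 0 <= q i <= 1.
Proof.
  intros Hq i. pose proof (partial_mass_bounds q Hq (S i)) as HS.
  pose proof (partial_mass_bounds q Hq i). rewrite partial_mass_S in HS.
  destruct Hq as [Hpos _]. specialize (Hpos i). lra.
Qed.

Definition gain (v : R) (q : nat -> R) (i : nat) : R :=
  v * (partial_mass q i + q i / 2) - INR i.

Lemma ex_series_weighted (p c : nat -> R) :
  is_strategy p -> (forall i, 0 <= c i <= 1) -> ex_series (fun i => p i * c i).
Proof.
  intros [Hp [Hs _]] Hc.
  apply (@ex_series_le R_AbsRing R_CompleteNormedModule _ p); [| eexists; exact Hs].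
  intro n. change (norm (p n * c n)) with (Rabs (p n * c n)).
  specialize (Hp n); specialize (Hc n). rewrite Rabs_pos_eq by nra. nra.
Qed.

Lemma payoff1_series (v : R) (p q : nat -> R) :
  is_strategy p -> is_strategy q ->
  is_series (fun i => p i * gain v q i) (payoff1 v p q).
Proof.
  intros Hp Hq.
  pose proof (Series_correct _ (ex_series_weighted p _ Hp (partial_mass_bounds q Hq))) as Hgt.
  pose proof (Series_correct _ (ex_series_weighted p _ Hp (mass_bounds q Hq))) as Heq.
  destruct Hp as [_ [_ Hmean]]. apply Series_correct in Hmean.
  pose proof (is_series_lincomb _ _ _ _ 1 (-1)
                (is_series_lincomb _ _ _ _ v (v / 2) Hgt Heq) Hmean) as H.
  replace (payoff1 v p q) with (1 * (v * prob_gt p q + v / 2 * prob_eq p q) + -1 * mean p)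
    by (unfold payoff1; ring).
  eapply is_series_ext; [| exact H]. intro n. unfold gain. simpl. field.
Qed.

Lemma payoff1_le (v V : R) (p q : nat -> R) :
  is_strategy p -> is_strategy q -> (forall i, gain v q i <= V) -> payoff1 v p q <= V.
Proof.
  intros Hp Hq HV. pose proof (payoff1_series v p q Hp Hq) as Hpay.
  destruct Hp as [Hpos [Hs _]].
  pose proof (is_series_lincomb _ _ _ _ V (-1) Hs Hpay) as H.
  enough (0 <= V * 1 + -1 * payoff1 v p q) by lra.
  eapply is_series_nonneg; [| exact H]. intro n; simpl. specialize (HV n); specialize (Hpos n). nra.
Qed.

Lemma payoff1_on_support (v V : R) (p q : nat -> R) :
  is_strategy p -> is_strategy q -> (forall i, p i <> 0 -> gain v q i = V) ->
  payoff1 v p q = V.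
Proof.
  intros Hp Hq HV. pose proof (payoff1_series v p q Hp Hq) as Hpay.
  destruct Hp as [_ [Hs _]]. apply (is_series_scal_r V) in Hs.
  rewrite Rmult_1_l in Hs. rewrite <- (is_series_unique _ _ Hpay), <- (is_series_unique _ _ Hs).
  apply Series_ext. intro n.
  destruct (Req_dec (p n) 0) as [Hz | Hz]; [rewrite Hz; ring | rewrite HV; auto].
Qed.

Lemma payoff2_payoff1 (v : R) (q p : nat -> R) : payoff2 v q p = payoff1 v q p.
Proof.
  unfold payoff2, payoff1, prob_eq. do 3 f_equal. apply Series_ext. intro. ring.
Qed.

Lemma allpay_NE_of_gains (v1 v2 V1 V2 : R) (X Y : nat -> R) :
  is_strategy X -> is_strategy Y ->
  (forall i, gain v1 Y i <= V1) -> (forall i, X i <> 0 -> gain v1 Y i = V1) ->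
  (forall j, gain v2 X j <= V2) -> (forall j, Y j <> 0 -> gain v2 X j = V2) ->
  allpay_NE v1 v2 X Y.
Proof.
  intros HX HY Hmax1 Hsupp1 Hmax2 Hsupp2. split; [exact HX | split; [exact HY | split]].
  - intros X' HX'. rewrite (payoff1_on_support v1 V1 X Y) by auto. apply payoff1_le; auto.
  - intros Y' HY'. rewrite !payoff2_payoff1, (payoff1_on_support v2 V2 Y X) by auto.
    apply payoff1_le; auto.
Qed.

Lemma gain_0 (v : R) (q : nat -> R) : gain v q 0 = v / 2 * q 0%nat.
Proof. unfold gain, partial_mass. simpl. field. Qed.

Lemma gain_step (v : R) (q : nat -> R) (i : nat) :
  v > 0 -> gain v q (S i) - gain v q i = v / 2 * (q i + q (S i) - 2 / v).
Proof. intro Hv. unfold gain. rewrite partial_mass_S, S_INR. field. lra. Qed.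

Lemma gain_nonincreasing (v : R) (q : nat -> R) (i0 : nat) :
  v > 0 -> (forall n, (i0 <= n)%nat -> q n + q (S n) <= 2 / v) ->
  forall n, (i0 <= n)%nat -> gain v q n <= gain v q i0.
Proof.
  intros Hv Hpair n Hn. induction Hn as [| n Hn IH]; [lra |].
  pose proof (gain_step v q n Hv). specialize (Hpair n Hn).
  assert (v / 2 * (q n + q (S n) - 2 / v) <= 0) by (apply Rmult_le_0_l; lra).
  lra.
Qed.

(* The shape of player 2's strategy that makes player 1's gain maximal exactly
   on the odd bids 1, 3, ..., 2m-1. *)
Definition balanced (v : R) (m : nat) (Y : nat -> R) : Prop :=
  (forall n, (2 * m < n)%nat -> Y n = 0) /\
  2 / v <= Y 0%nat + Y 1%nat /\
  (forall k, (1 <= k <= m)%nat -> Y (2 * k - 1)%nat + Y (2 * k)%nat <= 2 / v) /\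
  (forall k, (1 <= k <= m - 1)%nat ->
     Y (2 * k - 1)%nat + 2 * Y (2 * k)%nat + Y (2 * k + 1)%nat = 4 / v).

Section BalancedGain.
Variables (v : R) (m : nat) (Y : nat -> R).
Hypotheses (Hv : v > 0) (Hm : (1 <= m)%nat) (HY : forall n, 0 <= Y n) (Hbal : balanced v m Y).

(* The triple conditions make the gain constant along the odd bids. *)
Lemma balanced_gain_odd k : (1 <= k <= m)%nat -> gain v Y (2 * k - 1) = gain v Y 1.
Proof.
  destruct Hbal as [_ [_ [_ Htriple]]].
  induction k as [| k IH]; intro Hk; [lia |].
  destruct (Nat.eq_dec k 0) as [-> | Hk0]; [reflexivity |].
  rewrite <- IH by lia. specialize (Htriple k ltac:(lia)).
  pose proof (gain_step v Y (2 * k - 1) Hv) as Hstep1.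
  pose proof (gain_step v Y (2 * k) Hv) as Hstep2.
  replace (S (2 * k - 1)) with (2 * k)%nat in Hstep1 by lia.
  replace (2 * S k - 1)%nat with (S (2 * k)) by lia.
  replace (S (2 * k)) with (2 * k + 1)%nat in * by lia.
  assert (v / 2 * (Y (2 * k - 1)%nat + 2 * Y (2 * k)%nat + Y (2 * k + 1)%nat - 4 / v) = 0)
    by (rewrite Htriple; ring).
  lra.
Qed.

Lemma balanced_gain_max i : gain v Y i <= gain v Y 1.
Proof.
  destruct Hbal as [Hbeyond [H01 [Hpair _]]].
  assert (Hpair_le : forall k, (1 <= k <= m)%nat -> gain v Y (2 * k) <= gain v Y (2 * k - 1)).
  { intros k Hk. pose proof (gain_step v Y (2 * k - 1) Hv) as Hstep.
    replace (S (2 * k - 1)) with (2 * k)%nat in Hstep by lia. specialize (Hpair k Hk).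
    assert (v / 2 * (Y (2 * k - 1)%nat + Y (2 * k)%nat - 2 / v) <= 0)
      by (apply Rmult_le_0_l; lra).
    lra. }
  assert (Htail : forall n, (2 * m - 1 <= n)%nat -> gain v Y n <= gain v Y 1).
  { intros n Hn. rewrite <- (balanced_gain_odd m) by lia.
    apply gain_nonincreasing; [exact Hv | | exact Hn].
    intros j Hj. destruct (Nat.eq_dec j (2 * m - 1)) as [-> | Hj1].
    - replace (S (2 * m - 1)) with (2 * m)%nat by lia. apply Hpair; lia.
    - rewrite (Hbeyond (S j)) by lia.
      destruct (Nat.eq_dec j (2 * m)) as [-> | Hj2].
      + pose proof (Hpair m ltac:(lia)). pose proof (HY (2 * m - 1)%nat). lra.
      + rewrite Hbeyond by lia. assert (0 < 2 / v) by (apply Rdiv_lt_0_compat; lra). lra. }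
  destruct (Nat.Even_or_Odd i) as [[k ->] | [k ->]].
  - destruct k as [| k].
    + pose proof (gain_step v Y 0 Hv) as Hstep.
      assert (0 <= v / 2 * (Y 0%nat + Y 1%nat - 2 / v)) by (apply Rmult_le_pos; lra).
      simpl. lra.
    + destruct (le_lt_dec m (S k)); [apply Htail; lia |].
      rewrite <- (balanced_gain_odd (S k)) by lia. apply Hpair_le. lia.
  - destruct (le_lt_dec m k); [apply Htail; lia |].
    replace (2 * k + 1)%nat with (2 * S k - 1)%nat by lia.
    rewrite balanced_gain_odd by lia. lra.
Qed.

End BalancedGain.

Lemma sum_range_0 (a : nat) (f : nat -> R) : sum_range a 0 f = 0.
Proof. reflexivity. Qed.

Lemma sum_range_S (a k : nat) (f : nat -> R) :
  sum_range a (S k) f = f a + sum_range (S a) k f.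
Proof. reflexivity. Qed.

Lemma sum_range_ext (a k : nat) (f g : nat -> R) :
  (forall i, (a <= i < a + k)%nat -> f i = g i) -> sum_range a k f = sum_range a k g.
Proof.
  revert a; induction k as [| k IH]; intros a H; [reflexivity |].
  rewrite !sum_range_S, H by lia. rewrite IH; [reflexivity |]. intros; apply H; lia.
Qed.

Lemma sum_range_plus (a k : nat) (f g : nat -> R) :
  sum_range a k (fun i => f i + g i) = sum_range a k f + sum_range a k g.
Proof.
  revert a; induction k as [| k IH]; intro a; [rewrite !sum_range_0; ring |].
  rewrite !sum_range_S, IH. ring.
Qed.

Lemma sum_range_scal (a k : nat) (c : R) (f : nat -> R) :
  sum_range a k (fun i => c * f i) = c * sum_range a k f.
Proof.
  revert a; induction k as [| k IH]; intro a; [rewrite !sum_range_0; ring |].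
  rewrite !sum_range_S, IH. ring.
Qed.

Lemma sum_range_le (a k : nat) (f g : nat -> R) :
  (forall i, (a <= i < a + k)%nat -> f i <= g i) -> sum_range a k f <= sum_range a k g.
Proof.
  revert a; induction k as [| k IH]; intros a H; [rewrite !sum_range_0; lra |].
  rewrite !sum_range_S.
  apply Rplus_le_compat; [apply H; lia | apply IH; intros; apply H; lia].
Qed.

Lemma sum_range_nonneg (a k : nat) (f : nat -> R) :
  (forall i, (a <= i < a + k)%nat -> 0 <= f i) -> 0 <= sum_range a k f.
Proof.
  intro H. replace 0 with (sum_range a k (fun i => 0 * f i)) by (rewrite sum_range_scal; ring).
  apply sum_range_le. intros i Hi. specialize (H i Hi). lra.
Qed.

Lemma delta_other (j n : nat) : n <> j -> delta j n = 0.
Proof. intro H. unfold delta. destruct (Nat.eqb_spec n j); [lia | reflexivity]. Qed.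

Lemma delta_same (j n : nat) : n = j -> delta j n = 1.
Proof. intro H. unfold delta. destruct (Nat.eqb_spec n j); [reflexivity | lia]. Qed.

Lemma sum_range_delta_off (a k : nat) (c : R) (f : nat -> nat) (n : nat) :
  (forall i, (a <= i < a + k)%nat -> f i <> n) ->
  sum_range a k (fun i => c * delta (f i) n) = 0.
Proof.
  revert a; induction k as [| k IH]; intros a H; [reflexivity |].
  rewrite sum_range_S, delta_other, IH; [ring | intros; apply H; lia |].
  apply not_eq_sym, H. lia.
Qed.

Lemma sum_range_delta_on (a k : nat) (c : R) (f : nat -> nat) (n : nat) :
  (exists i0, (a <= i0 < a + k)%nat /\ f i0 = n) ->
  (forall i i', (a <= i < a + k)%nat -> (a <= i' < a + k)%nat -> f i = n -> f i' = n -> i = i') ->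
  sum_range a k (fun i => c * delta (f i) n) = c.
Proof.
  revert a; induction k as [| k IH]; intros a [i0 [Hi0 Hf]] Huniq; [lia |].
  rewrite sum_range_S.
  destruct (Nat.eq_dec i0 a) as [-> | Hne].
  - rewrite delta_same by auto. rewrite sum_range_delta_off; [ring |].
    intros i Hi Hfi. specialize (Huniq i a ltac:(lia) ltac:(lia) Hfi Hf). lia.
  - rewrite delta_other, IH; [ring | exists i0; split; [lia | exact Hf] | |].
    + intros i i' Hi Hi'. apply Huniq; lia.
    + intro Hfa. specialize (Huniq i0 a ltac:(lia) ltac:(lia) Hf (eq_sym Hfa)). lia.
Qed.

(* Evaluates point masses and uniform mixtures of point masses at explicit
   bids: every side condition is linear arithmetic on the indices. *)
Ltac eval_atoms :=
  repeat match goal with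
  | |- context [delta ?j ?n] =>
      first [ rewrite (delta_other j n) by lia | rewrite (delta_same j n) by lia ]
  | |- context [sum_range ?a ?k (fun i => ?c * delta (@?f i) ?n)] =>
      first [ rewrite (sum_range_delta_off a k c f n) by (intros; simpl; lia)
            | rewrite (sum_range_delta_on a k c f n);
                [ | match n with
                    | (2 * ?kk - 1)%nat => exists kk; simpl; lia
                    | (2 * ?kk)%nat => exists kk; simpl; lia
                    | (2 * ?kk + 1)%nat => exists (kk + 1)%nat; simpl; lia
                    end
                  | intros; simpl in *; lia ] ]
  end.

Section UniformValues.
Variable m : nat.

Lemma U_O_odd k : (1 <= k <= m)%nat -> U_O m (2 * k - 1) = / INR m.
Proof. intro. unfold U_O. eval_atoms. reflexivity. Qed.

Lemma U_O_off n : (forall k, (1 <= k <= m)%nat -> n <> (2 * k - 1)%nat) -> U_O m n = 0.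
Proof. intro H. unfold U_O. apply sum_range_delta_off. intros i Hi Heq. apply (H i); lia. Qed.

Lemma U_E_even k : (k <= m)%nat -> U_E m (2 * k) = / INR (m + 1).
Proof. intro. unfold U_E. eval_atoms. reflexivity. Qed.

Lemma U_E_off n : (forall k, (k <= m)%nat -> n <> (2 * k)%nat) -> U_E m n = 0.
Proof. intro H. unfold U_E. apply sum_range_delta_off. intros i Hi Heq. apply (H i); lia. Qed.

Lemma U_Oup1_even k : (1 <= k <= m - 1)%nat -> U_Oup1 m (2 * k) = / INR (m - 1).
Proof. intro. unfold U_Oup1. eval_atoms. reflexivity. Qed.

Lemma U_Oup1_off n : (forall k, (1 <= k <= m - 1)%nat -> n <> (2 * k)%nat) -> U_Oup1 m n = 0.
Proof. intro H. unfold U_Oup1. apply sum_range_delta_off. intros i Hi Heq. apply (H i); lia. Qed.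

(* Each pair of consecutive bids inside {0,...,2m} contains exactly one atom of U_O^m. *)
Lemma U_O_pair j : (j < 2 * m)%nat -> U_O m j + U_O m (S j) = / INR m.
Proof.
  intro Hj. destruct (Nat.Even_or_Odd j) as [[k ->] | [k ->]].
  - rewrite (U_O_off (2 * k)) by (intros; lia).
    replace (S (2 * k)) with (2 * (k + 1) - 1)%nat by lia. rewrite U_O_odd by lia. ring.
  - rewrite (U_O_off (S (2 * k + 1))) by (intros; lia).
    replace (2 * k + 1)%nat with (2 * (k + 1) - 1)%nat by lia. rewrite U_O_odd by lia. ring.
Qed.

Lemma U_Oup1_le k : (2 <= m)%nat -> U_Oup1 m (2 * k) <= / (INR m - 1).
Proof.
  intro Hm.
  assert (Hx : INR m >= 2) by (replace 2 with (INR 2) by reflexivity; apply Rle_ge, le_INR; lia).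
  assert (0 < / (INR m - 1)) by (apply Rinv_0_lt_compat; lra).
  destruct (le_lt_dec 1 k) as [Hk1 | Hk1]; [destruct (le_lt_dec k (m - 1)) as [Hk2 | Hk2] |].
  - rewrite U_Oup1_even, minus_INR by lia. simpl. lra.
  - rewrite U_Oup1_off by (intros; lia). lra.
  - rewrite U_Oup1_off by (intros; lia). lra.
Qed.

End UniformValues.

Lemma gain_against_U_O (v2 : R) (m : nat) :
  (1 <= m)%nat -> INR m = v2 / 2 ->
  (forall j, (j <= 2 * m)%nat -> gain v2 (U_O m) j = 0) /\ (forall j, gain v2 (U_O m) j <= 0).
Proof.
  intros Hm Hv2. assert (Hpos : INR m > 0) by (apply lt_0_INR; lia).
  assert (Hv : v2 > 0) by lra.
  assert (Hflat : forall j, (j <= 2 * m)%nat -> gain v2 (U_O m) j = 0).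
  { induction j as [| j IH]; intro Hj.
    - rewrite gain_0, (U_O_off m 0) by (intros; lia). ring.
    - pose proof (gain_step v2 (U_O m) j Hv) as Hstep. rewrite U_O_pair, IH in Hstep by lia.
      replace (2 / v2) with (/ INR m) in Hstep by (rewrite Hv2; field; lra). lra. }
  split; [exact Hflat |]. intro j.
  destruct (le_lt_dec j (2 * m)) as [Hj | Hj]; [rewrite Hflat by exact Hj; lra |].
  rewrite <- (Hflat (2 * m)%nat) by lia. apply gain_nonincreasing; [exact Hv | | lia].
  intros n Hn. rewrite !(U_O_off m) by (intros; lia).
  assert (0 < 2 / v2) by (apply Rdiv_lt_0_compat; lra). lra.
Qed.

Lemma allpay_NE_U_O (v1 v2 : R) (m : nat) (Y : nat -> R) :
  v1 > 0 -> (1 <= m)%nat -> INR m = v2 / 2 ->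
  is_strategy (U_O m) -> is_strategy Y -> balanced v1 m Y ->
  allpay_NE v1 v2 (U_O m) Y.
Proof.
  intros Hv Hm Hv2 HX HY Hbal.
  assert (HYpos : forall n, 0 <= Y n) by apply HY.
  destruct (gain_against_U_O v2 m Hm Hv2) as [Hflat Hmax2].
  apply (allpay_NE_of_gains v1 v2 (gain v1 Y 1) 0); auto.
  - apply (balanced_gain_max v1 m); auto.
  - intros i Hi. destruct (Nat.Even_or_Odd i) as [[k ->] | [k ->]].
    + exfalso. apply Hi, U_O_off. intros; lia.
    + destruct (le_lt_dec m k); [exfalso; apply Hi, U_O_off; intros; lia |].
      replace (2 * k + 1)%nat with (2 * S k - 1)%nat by lia.
      apply (balanced_gain_odd v1 m); auto; lia.
  - intros j Hj. apply Hflat. destruct (le_lt_dec j (2 * m)) as [| Hlt]; [assumption |].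
    exfalso. apply Hj. destruct Hbal as [Hbeyond _]. apply Hbeyond. exact Hlt.
Qed.

Lemma half_inv (x : R) : / (2 * x) = / x / 2.
Proof. rewrite Rinv_mult. unfold Rdiv. ring. Qed.

Section WValues.
Variables m j : nat.
Hypothesis Hj : (1 <= j <= m - 1)%nat.

Lemma W_0 : W m j 0 = / INR m / 2.
Proof. unfold W. eval_atoms. rewrite half_inv. ring. Qed.

Lemma W_1 : W m j 1 = 0.
Proof. unfold W. replace 1%nat with (2 * 1 - 1)%nat by reflexivity. eval_atoms. ring. Qed.

Lemma W_beyond n : (2 * m < n)%nat -> W m j n = 0.
Proof. intro. unfold W. eval_atoms. ring. Qed.

Lemma W_pair k : (1 <= k <= m)%nat -> W m j (2 * k - 1) + W m j (2 * k) <= / INR m.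
Proof.
  intro Hk. assert (0 <= / INR m) by (apply Rlt_le, Rinv_0_lt_compat, lt_0_INR; lia).
  unfold W. destruct (lt_eq_lt_dec k j) as [[Hlt | ->] | Hgt]; eval_atoms; rewrite half_inv; lra.
Qed.

Lemma W_triple k : (1 <= k <= m - 1)%nat ->
  W m j (2 * k - 1) + 2 * W m j (2 * k) + W m j (2 * k + 1) = 2 / INR m.
Proof.
  intro Hk.
  unfold W. destruct (lt_eq_lt_dec k j) as [[Hlt | ->] | Hgt]; eval_atoms; rewrite half_inv; field;
    apply not_0_INR; lia.
Qed.

End WValues.

Definition W_mix (m : nat) (l : nat -> R) (n : nat) : R :=
  sum_range 1 (m - 1) (fun j => l j * W m j n).
Definition W_weight (m : nat) (l : nat -> R) : R := sum_range 1 (m - 1) l.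

Section WMixture.
Variables (m : nat) (l : nat -> R).
Hypothesis Hl : forall j, (1 <= j <= m - 1)%nat -> 0 <= l j.

Lemma W_mix_beyond n : (2 * m < n)%nat -> W_mix m l n = 0.
Proof.
  intro. unfold W_mix. rewrite (sum_range_ext _ _ _ (fun j => 0 * l j)).
  - rewrite sum_range_scal. ring.
  - intros j Hj. rewrite W_beyond by lia. ring.
Qed.

Lemma W_mix_0_1 : W_mix m l 0 + W_mix m l 1 = / INR m / 2 * W_weight m l.
Proof.
  unfold W_mix, W_weight. rewrite <- sum_range_plus, <- sum_range_scal.
  apply sum_range_ext. intros j Hj. rewrite W_0, W_1 by lia. ring.
Qed.

Lemma W_mix_pair k : (1 <= k <= m)%nat ->
  W_mix m l (2 * k - 1) + W_mix m l (2 * k) <= / INR m * W_weight m l.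
Proof.
  intro Hk. unfold W_mix, W_weight. rewrite <- sum_range_plus, <- sum_range_scal.
  apply sum_range_le. intros j Hj.
  pose proof (W_pair m j ltac:(lia) k Hk). specialize (Hl j ltac:(lia)). nra.
Qed.

Lemma W_mix_triple k : (1 <= k <= m - 1)%nat ->
  W_mix m l (2 * k - 1) + 2 * W_mix m l (2 * k) + W_mix m l (2 * k + 1)
  = 2 / INR m * W_weight m l.
Proof.
  intro Hk. unfold W_mix, W_weight. rewrite <- !sum_range_scal, <- !sum_range_plus.
  apply sum_range_ext. intros j Hj. rewrite <- (W_triple m j ltac:(lia) k Hk). ring.
Qed.

End WMixture.

Definition Y_mix (m : nat) (b lO lE lU : R) (l : nat -> R) (n : nat) : R :=
  (1 - b / INR m) * delta 0 n
  + b / INR m * (lO * U_O m n + lE * U_E m n + lU * U_Oup1 m n + W_mix m l n).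

Lemma INR_add_1 (n : nat) : INR (n + 1) = INR n + 1.
Proof. rewrite plus_INR. reflexivity. Qed.

Section MixtureValues.
Variables (m : nat) (b lO lE lU : R) (l : nat -> R).
Hypothesis Hm : (1 <= m)%nat.

Let Y := Y_mix m b lO lE lU l.

Lemma Y_mix_beyond n : (2 * m < n)%nat -> Y n = 0.
Proof.
  intro. unfold Y, Y_mix. rewrite W_mix_beyond, U_O_off, U_E_off, U_Oup1_off by (intros; lia).
  eval_atoms. ring.
Qed.

Lemma Y_mix_0_1 : Y 0%nat + Y 1%nat =
  (1 - b / INR m) + b / INR m * (lO / INR m + lE / (INR m + 1) + W_weight m l / (2 * INR m)).
Proof.
  assert (Hx : INR m > 0) by (apply lt_0_INR; lia).
  assert (HY0 : Y 0%nat = (1 - b / INR m) + b / INR m * (lE / (INR m + 1) + W_mix m l 0)).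
  { unfold Y, Y_mix. eval_atoms.
    rewrite (U_O_off m 0), (U_Oup1_off m 0) by (intros; lia).
    change (U_E m 0) with (U_E m (2 * 0)). rewrite U_E_even, INR_add_1 by lia. field; split; lra. }
  assert (HY1 : Y 1%nat = b / INR m * (lO / INR m + W_mix m l 1)).
  { unfold Y, Y_mix. eval_atoms.
    rewrite (U_E_off m 1), (U_Oup1_off m 1) by (intros; lia).
    change (U_O m 1) with (U_O m (2 * 1 - 1)). rewrite U_O_odd by lia. field. lra. }
  rewrite HY0, HY1.
  replace (W_weight m l / (2 * INR m)) with (/ INR m / 2 * W_weight m l) by (field; lra).
  rewrite <- W_mix_0_1. ring.
Qed.

Lemma Y_mix_pair k : (1 <= k <= m)%nat ->
  Y (2 * k - 1)%nat + Y (2 * k)%nat =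
  b / INR m * (lO / INR m + lE / (INR m + 1) + lU * U_Oup1 m (2 * k)
               + (W_mix m l (2 * k - 1) + W_mix m l (2 * k))).
Proof.
  intro Hk. unfold Y, Y_mix. eval_atoms.
  rewrite (U_O_odd m k), (U_E_even m k), INR_add_1 by lia.
  rewrite (U_O_off m (2 * k)), (U_E_off m (2 * k - 1)), (U_Oup1_off m (2 * k - 1))
    by (intros; lia).
  unfold Rdiv. ring.
Qed.

Lemma Y_mix_triple k : (1 <= k <= m - 1)%nat ->
  Y (2 * k - 1)%nat + 2 * Y (2 * k)%nat + Y (2 * k + 1)%nat =
  2 * (b / INR m) * (lO / INR m + lE / (INR m + 1) + lU / (INR m - 1) + W_weight m l / INR m).
Proof.
  intro Hk. pose proof (W_mix_triple m l k Hk) as HW.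
  assert (Hsub : INR (m - 1) = INR m - 1) by (rewrite minus_INR by lia; reflexivity).
  unfold Y, Y_mix. eval_atoms.
  replace (2 * k + 1)%nat with (2 * (k + 1) - 1)%nat by lia.
  rewrite (U_O_odd m k), (U_O_odd m (k + 1)), (U_E_even m k), (U_Oup1_even m k), Hsub, INR_add_1
    by lia.
  rewrite (U_O_off m (2 * k)), (U_E_off m (2 * k - 1)), (U_E_off m (2 * (k + 1) - 1)),
    (U_Oup1_off m (2 * k - 1)), (U_Oup1_off m (2 * (k + 1) - 1)) by (intros; lia).
  replace (2 * (k + 1) - 1)%nat with (2 * k + 1)%nat by lia.
  unfold Rdiv in *.
  transitivity (b * / INR m * (2 * (lO * / INR m) + 2 * (lE * / (INR m + 1))
                + 2 * (lU * / (INR m - 1))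
                + (W_mix m l (2 * k - 1) + 2 * W_mix m l (2 * k) + W_mix m l (2 * k + 1))));
    [ring | rewrite HW; ring].
Qed.

End MixtureValues.

(* Case distinction of the statement: the mass b/m of the non-zero part can
   afford the weight lU/(m-1) + L/(2m) next to the bid 0. *)
Lemma tail_weight_bound (x b lU L : R) :
  x >= 2 -> 0 < b <= x -> 0 <= lU -> 0 <= L -> lU + L <= 1 ->
  (b > x - 1 -> 1 / (2 * x) * L + lU / (x - 1) <= (x - b) / b) ->
  lU / (x - 1) + L / (2 * x) <= (x - b) / b.
Proof.
  intros Hx Hb HlU HL Hsum Hlarge.
  destruct (Rlt_le_dec (x - 1) b) as [Hbig | Hsmall].
  - specialize (Hlarge Hbig). unfold Rdiv in *. lra.
  - assert (H1 : L / (2 * x) <= L / (x - 1)).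
    { unfold Rdiv. apply Rmult_le_compat_l; [exact HL |].
      apply Rinv_le_contravar; lra. }
    assert (H2 : (lU + L) / (x - 1) <= 1 / (x - 1)).
    { unfold Rdiv. apply Rmult_le_compat_r; [apply Rlt_le, Rinv_0_lt_compat; lra | exact Hsum]. }
    assert (H3 : 1 / (x - 1) <= (x - b) / b).
    { apply Rmult_le_reg_r with (b * (x - 1)); [nra |].
      replace (1 / (x - 1) * (b * (x - 1))) with b by (field; lra).
      replace ((x - b) / b * (b * (x - 1))) with ((x - b) * (x - 1)) by (field; lra). nra. }
    unfold Rdiv in *. lra.
Qed.

Lemma balanced_Y_mix (v1 b lO lE lU : R) (m : nat) (l : nat -> R) :
  (2 <= m)%nat -> 0 < b <= INR m -> v1 > 0 ->
  0 <= lO -> 0 <= lE -> 0 <= lU -> (forall j, (1 <= j <= m - 1)%nat -> 0 <= l j) ->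
  lO + lE + lU + W_weight m l = 1 ->
  lO / INR m + lE / (INR m + 1) + lU / (INR m - 1) + 1 / INR m * W_weight m l
    = 2 * INR m / (b * v1) ->
  (b > INR m - 1 -> 1 / (2 * INR m) * W_weight m l + lU / (INR m - 1) <= (INR m - b) / b) ->
  balanced v1 m (Y_mix m b lO lE lU l).
Proof.
  intros Hm Hb Hv HlO HlE HlU Hl Hsum Heq Hlarge.
  assert (Hx : INR m >= 2) by (replace 2 with (INR 2) by reflexivity; apply Rle_ge, le_INR; lia).
  assert (HL : 0 <= W_weight m l) by (apply sum_range_nonneg; intros; apply Hl; lia).
  assert (Hs : 0 < b / INR m) by (apply Rdiv_lt_0_compat; lra).
  set (P := lO / INR m + lE / (INR m + 1) + lU / (INR m - 1) + W_weight m l / INR m).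
  assert (HP : b / INR m * P = 2 / v1).
  { unfold P. replace (W_weight m l / INR m) with (1 / INR m * W_weight m l) by (field; lra).
    rewrite Heq. field. lra. }
  pose proof (tail_weight_bound (INR m) b lU (W_weight m l) Hx Hb HlU HL ltac:(lra) Hlarge)
    as Htail.
  split; [| split; [| split]].
  - apply Y_mix_beyond. lia.
  - rewrite Y_mix_0_1 by lia. rewrite <- HP.
    assert (Hgap : 1 - b / INR m = b / INR m * ((INR m - b) / b)) by (field; lra).
    assert (b / INR m * (lU / (INR m - 1) + W_weight m l / (2 * INR m))
            <= b / INR m * ((INR m - b) / b)) by (apply Rmult_le_compat_l; lra).
    unfold P. replace (W_weight m l / INR m) with (2 * (W_weight m l / (2 * INR m)))
      by (field; lra). nra.
  - intros k Hk. rewrite Y_mix_pair by lia. rewrite <- HP. apply Rmult_le_compat_l; [lra |].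
    pose proof (U_Oup1_le m k Hm). pose proof (W_mix_pair m l Hl k Hk).
    assert (lU * U_Oup1 m (2 * k) <= lU / (INR m - 1)) by (apply Rmult_le_compat_l; lra).
    unfold P. unfold Rdiv in *. lra.
  - intros k Hk. rewrite Y_mix_triple by lia. fold P. rewrite Rmult_assoc, HP. field. lra.
Qed.

(* Case m = 1: here Y mixes only U_O^1 and U_E^1; the upper bound on lE gives
   the condition on Y(0)+Y(1), the lower bound the one on Y(1)+Y(2). *)
Lemma balanced_Y_mix_1 (v1 b lO lE : R) :
  0 < b <= 1 -> v1 > 0 -> lO + lE = 1 ->
  lE / 2 >= 1 - 2 / (b * v1) -> lE / 2 <= 1 / b - 2 / (b * v1) ->
  balanced v1 1 (Y_mix 1 b lO lE 0 (fun _ => 0)).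
Proof.
  intros Hb Hv Hsum Hlow Hhigh.
  assert (Hlow' : b * (lE / 2) >= b - 2 / v1).
  { replace (b - 2 / v1) with (b * (1 - 2 / (b * v1))) by (field; lra).
    apply Rmult_ge_compat_l; lra. }
  assert (Hhigh' : b * (lE / 2) <= 1 - 2 / v1).
  { replace (1 - 2 / v1) with (b * (1 / b - 2 / (b * v1))) by (field; lra).
    apply Rmult_le_compat_l; lra. }
  split; [| split; [| split]].
  - apply Y_mix_beyond. lia.
  - rewrite Y_mix_0_1 by lia. change (W_weight 1 (fun _ => 0)) with 0. simpl INR.
    replace lO with (1 - lE) by lra. field_simplify; lra.
  - intros k Hk. replace k with 1%nat by lia. rewrite Y_mix_pair by lia.
    change (W_mix 1 (fun _ => 0) (2 * 1 - 1)) with 0. change (W_mix 1 (fun _ => 0) (2 * 1)) with 0.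
    simpl INR. replace lO with (1 - lE) by lra. field_simplify; lra.
  - intros k Hk. lia.
Qed.

Lemma balanced_ext (v : R) (m : nat) (Y Y' : nat -> R) :
  (forall n, Y n = Y' n) -> balanced v m Y -> balanced v m Y'.
Proof.
  intros HYY' [Hbeyond [H01 [Hpair Htriple]]].
  split; [| split; [| split]]; intros; rewrite <- ?HYY'; auto.
Qed.

Theorem lemma3 (v1 v2 : R) (m : nat) (b : R) (X Y : nat -> R) :
  v1 >= v2 -> v2 > 0 -> (1 <= m)%nat -> 0 < b <= INR m ->
  is_strategy X -> is_strategy Y -> mean X = INR m -> mean Y = b ->
  INR m = v2 / 2 ->
  lotto_NE (INR m) b X Y ->
  X = U_O m ->
  (m = 1%nat ->
     exists lO lE : R,
       0 <= lO /\ 0 <= lE /\ lO + lE = 1 /\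
       lE / 2 >= 1 - 2 / (b * v1) /\
       lE / 2 <= 1 / b - 2 / (b * v1) /\
       Y = (fun n => (1 - b / INR m) * delta 0 n
                     + b / INR m * (lO * U_O 1 n + lE * U_E 1 n))) ->
  ((2 <= m)%nat ->
     exists (lO lE lU : R) (l : nat -> R),
       0 <= lO /\ 0 <= lE /\ 0 <= lU /\
       (forall j, (1 <= j <= m - 1)%nat -> 0 <= l j) /\
       lO + lE + lU + sum_range 1 (m - 1) l = 1 /\
       lE / (INR m + 1) + 1 / (2 * INR m) * sum_range 1 (m - 1) l
         <= INR m / b * (1 - v2 / v1) /\
       lO / INR m + lE / (INR m + 1) + lU / (INR m - 1)
         + 1 / INR m * sum_range 1 (m - 1) l = 2 * INR m / (b * v1) /\
       (b > INR m - 1 ->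
          1 / (2 * INR m) * sum_range 1 (m - 1) l + lU / (INR m - 1)
            <= (INR m - b) / b) /\
       Y = (fun n => (1 - b / INR m) * delta 0 n
                     + b / INR m * (lO * U_O m n + lE * U_E m n + lU * U_Oup1 m n
                                    + sum_range 1 (m - 1) (fun j => l j * W m j n)))) ->
  allpay_NE v1 v2 X Y.
Proof.
  intros Hv12 Hv2 Hm Hb HX HY _ _ Hm2 _ -> Hcase1 Hcase2.
  assert (Hv1 : v1 > 0) by lra.
  apply allpay_NE_U_O; [exact Hv1 | exact Hm | exact Hm2 | exact HX | exact HY |].
  destruct (Nat.eq_dec m 1) as [-> | Hm1].
  - destruct (Hcase1 eq_refl) as (lO & lE & _ & _ & Hsum & Hlow & Hhigh & ->).
    apply (balanced_ext v1 1 (Y_mix 1 b lO lE 0 (fun _ => 0))).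
    + intro n. unfold Y_mix. change (U_Oup1 1 n) with 0. change (W_mix 1 (fun _ => 0) n) with 0.
      ring.
    + apply balanced_Y_mix_1; simpl INR in Hb; assumption.
  - destruct (Hcase2 ltac:(lia))
      as (lO & lE & lU & l & HlO & HlE & HlU & Hl & Hsum & _ & Heq & Hlarge & ->).
    exact (balanced_Y_mix v1 b lO lE lU m l ltac:(lia) Hb Hv1 HlO HlE HlU Hl Hsum Heq Hlarge).
Qed.
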